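(* Let $\mathcal{A}$ be a complex Banach algebra with unity and let $a\in\mathcal{A}$. If $x\in\mathcal{A}$ is a g$\pi$-Hirano inverse of $a$, then $a$ is generalized Drazin invertible and its generalized Drazin inverse is $a^{d}=x$.
   Context: An element $q\in\mathcal{A}$ is quasinilpotent if its spectrum is $\sigma(q)=\{0\}$; $\mathcal{A}^{qnil}$ denotes the set of quasinilpotent elements. An element $x\in\mathcal{A}$ is a generalized Drazin inverse of $a$ if $xax=x$, $ax=xa$ and $a-a^{2}x\in\mathcal{A}^{qnil}$; it is unique when it exists and is denoted $a^{d}$. An element $x\in\mathcal{A}$ is a g$\pi$-Hirano inverse of $a$ if $xax=x$, $ax=xa$ and $a-a^{n+2}x\in\mathcal{A}^{qnil}$ for some positive integer $n$. *)

From HB Require Import structures.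
From mathcomp Require Import all_boot all_order all_algebra.
From mathcomp Require Import classical_sets.
From mathcomp Require Import complex.
Set Implicit Arguments. Unset Strict Implicit. Unset Printing Implicit Defensive.
Import Order.TTheory GRing.Theory Num.Theory.
Local Open Scope classical_set_scope.
Local Open Scope ring_scope.

(* The norm is an explicit operation (mathcomp-analysis has no
   normed-ring structure and HB forbids joining its normed modules with
   GRing.UnitRing), with all the usual axioms: a norm on the K-vector space A,
   submultiplicative, with ||1|| = 1, and A complete for it (every Cauchy
   sequence converges). *)
HB.mixin Record isBanachAlgebra (K : numFieldType) (A : Type)
  of GRing.UnitAlgebra K A := {
  bnorm : A -> K ;
  bnorm_ge0 : forall x : A, 0 <= bnorm x ;
  bnorm_eq0 : forall x : A, bnorm x = 0 -> x = 0 ;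
  bnormZ : forall (k : K) (x : A), bnorm (k *: x) = `|k| * bnorm x ;
  bnormD : forall x y : A, bnorm (x + y) <= bnorm x + bnorm y ;
  bnormM : forall x y : A, bnorm (x * y) <= bnorm x * bnorm y ;
  bnorm1 : bnorm 1 = 1 ;
  bcomplete : forall u : nat -> A,
    (forall e : K, 0 < e -> exists N : nat, forall m n : nat,
        (N <= m)%N -> (N <= n)%N -> bnorm (u m - u n) < e) ->
    exists l : A, forall e : K, 0 < e -> exists N : nat, forall n : nat,
        (N <= n)%N -> bnorm (u n - l) < e
}.

#[short(type="banachAlgType")]
HB.structure Definition BanachAlgebra (K : numFieldType) :=
  { A of isBanachAlgebra K A & GRing.UnitAlgebra K A }.

Section Defs.
Variables (K : numFieldType) (A : banachAlgType K).

Definition spectrum (a : A) : set K := [set l | ~ (l%:A - a \is a GRing.unit)].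

Definition quasinilpotent (q : A) : Prop := spectrum q = [set 0].

Definition is_gdrazin_inverse (a x : A) : Prop :=
  [/\ x * a * x = x, a * x = x * a & quasinilpotent (a - a ^+ 2 * x)].

Definition gdrazin_invertible (a : A) : Prop := exists x, is_gdrazin_inverse a x.

Definition is_gpi_hirano_inverse (a x : A) : Prop :=
  [/\ x * a * x = x, a * x = x * a &
      exists n : nat, (0 < n)%N /\ quasinilpotent (a - a ^+ (n + 2) * x)].
End Defs.

From HB Require Import structures.
From mathcomp Require Import all_boot all_order all_algebra.
From mathcomp Require Import classical_sets reals.
From mathcomp Require Import complex.
Set Implicit Arguments.
Unset Strict Implicit.
Import Order.TTheory GRing.Theory Num.Theory.
Local Open Scope ring_scope.

(* The idempotent p := a x commutes with a, and x (1 - p) = 0, so that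
   a - a^2 x = (a - a^(n+2) x) (1 - p) for every n.  It remains to see that
   q (1 - p) is quasinilpotent whenever q is and p is an idempotent commuting
   with q: for l <> 0, l - q (1 - p) = (l - q) (1 - p) + l p is invertible,
   its inverse being computed blockwise in the Peirce decomposition along p;
   and q (1 - p) is not invertible, since it kills p, which would force p = 0
   and q invertible. *)

Section PeirceDecomposition.
Variables (R : unitRingType) (p : R).
Hypothesis p_idem : p * p = p.

Lemma mul_complement_idem : (1 - p) * p = 0.
Proof. by rewrite mulrBl mul1r p_idem subrr. Qed.

Lemma mul_idem_complement : p * (1 - p) = 0.
Proof. by rewrite mulrBr mulr1 p_idem subrr. Qed.

Lemma complement_idem : (1 - p) * (1 - p) = 1 - p.
Proof. by rewrite mulrBr mulr1 mul_complement_idem subr0. Qed.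

Lemma commr_complement_idem (y : R) : GRing.comm y p -> GRing.comm y (1 - p).
Proof. by move=> yp; apply: commrB; [apply: commr1 | apply: yp]. Qed.

Lemma mulr_peirce (u v u' v' : R) : GRing.comm u' p -> GRing.comm v' p ->
  (u * (1 - p) + v * p) * (u' * (1 - p) + v' * p)
  = u * u' * (1 - p) + v * v' * p.
Proof.
move=> u'p v'p.
have u'P := commr_complement_idem u'p; have v'P := commr_complement_idem v'p.
move: u'P v'P complement_idem mul_complement_idem mul_idem_complement.
move: (1 - p) => P u'P v'P PP Pp pP.
rewrite mulrDl !mulrDr -!mulrA (mulrA P u') (mulrA P v') (mulrA p u') (mulrA p v').
by rewrite -u'P -v'P -u'p -v'p -!mulrA PP Pp pP p_idem !mulr0 addr0 add0r !mulrA.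
Qed.

Lemma unitr_peirce (u v : R) : GRing.comm u p -> GRing.comm v p ->
  u \is a GRing.unit -> v \is a GRing.unit -> u * (1 - p) + v * p \is a GRing.unit.
Proof.
move=> up vp Uu Uv; apply/unitrP; exists (u^-1 * (1 - p) + v^-1 * p).
have u'p : GRing.comm u^-1 p by apply/commr_sym/commrV/commr_sym.
have v'p : GRing.comm v^-1 p by apply/commr_sym/commrV/commr_sym.
rewrite !mulr_peirce // mulrV // mulVr // mulrV // mulVr //.
by rewrite !mul1r subrK.
Qed.

End PeirceDecomposition.

Section Quasinilpotent.
Variables (K : numFieldType) (A : banachAlgType K).

Lemma quasinilpotentP (q : A) : quasinilpotent q <->
  q \isn't a GRing.unit /\ forall l, l != 0 -> l%:A - q \is a GRing.unit.
Proof.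
have spec0 : spectrum q 0 <-> q \isn't a GRing.unit.
  by rewrite /spectrum /= scale0r sub0r unitrN; split=> /negP.
split=> [qnil | [Nq Uq]].
  have specE l : spectrum q l <-> l = 0 by rewrite qnil.
  split; first exact/spec0/specE.
  by move=> l l0; apply/negPn/negP => /negP /specE /eqP; rewrite (negPf l0).
apply/seteqP; split=> l /=.
  by apply: contraPeq => /Uq Ul; apply.
by move=> ->; apply/spec0.
Qed.

Lemma quasinilpotentM_complement_idem (q p : A) : p * p = p -> GRing.comm q p ->
  quasinilpotent q -> quasinilpotent (q * (1 - p)).
Proof.
move=> p_idem qp /quasinilpotentP [Nq Uq]; apply/quasinilpotentP; split.
  apply: contra Nq => Uq1p.
  have p0 : p = 0.
    by apply: (mulrI Uq1p); rewrite -mulrA mul_complement_idem // !mulr0.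
  by rewrite p0 subr0 mulr1 in Uq1p.
move=> l l0.
have -> : l%:A - q * (1 - p) = (l%:A - q) * (1 - p) + l%:A * p.
  by rewrite mulrBl addrAC -mulrDr subrK mulr1.
apply: unitr_peirce => //.
- by apply/commr_sym/commrB; apply/commr_sym => //; apply: comm_alg.
- exact: comm_alg.
- exact: Uq.
- by rewrite scaler_unit ?unitr1 ?unitfE.
Qed.

End Quasinilpotent.

Section InnerInverse.
Variables (R : pzRingType) (a x : R).
Hypotheses (xax : x * a * x = x) (ax : a * x = x * a).

Lemma mul_inner_idem : (a * x) * (a * x) = a * x.
Proof. by rewrite mulrA -(mulrA a x a) -(mulrA a) xax. Qed.

Lemma commr_residual_inner (n : nat) : GRing.comm (a - a ^+ n * x) (a * x).
Proof.
have pa := commr_sym (commrM (commr_refl a) ax).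
have px := commr_sym (commrM (commr_sym ax) (commr_refl x)).
by apply/commr_sym/commrB; [exact: pa | exact: commrM (commrX n pa) px].
Qed.

Lemma gdrazin_residual_factor (n : nat) :
  a - a ^+ 2 * x = (a - a ^+ (n + 2) * x) * (1 - a * x).
Proof.
rewrite mulrBr mulr1 mulrBl -(mulrA (a ^+ (n + 2))) (mulrA x a x) xax.
by rewrite opprB addrA subrK expr2 mulrA.
Qed.

End InnerInverse.

Theorem proposition2p1 (R : realType) (A : banachAlgType R[i]) (a x : A) :
  is_gpi_hirano_inverse a x ->
  gdrazin_invertible a /\ is_gdrazin_inverse a x.
Proof.
case=> xax ax [n [_ qnil]].
suff gd : is_gdrazin_inverse a x by split=> //; exists x.
split=> //; rewrite (gdrazin_residual_factor xax n).
apply: quasinilpotentM_complement_idem qnil.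
- exact: mul_inner_idem xax.
- exact: commr_residual_inner ax (n + 2)%N.
Qed.
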